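(* Let $p(t)=a+bt+ct^2\in\mathbb C[t]$ with $a\,c\,(a+b+c)\neq 0$, let $V_{p}$ be its associated circulant matrix and $(S_{[k]})_{k\ge1}$ its sequence of column partial sums. Then [$V_{p}$ has a finite period and $(S_{[k]})_{k\geq1}$ is eventually periodic] if and only if [$b=c=-2a$, i.e. $p(t)=a(1-2t-2t^2)$, and $3a$ is a root of unity]. Moreover, in that case the period $\mu$ of $V_p$ satisfies $6\mid\mu$ and $(3a)^{\mu}=1$.
   Context: For a polynomial $p(t)=a_0+a_1t+\cdots+a_dt^d\in\mathbb C[t]$ of degree $d\ge1$ with $a_0\neq0$: the associated circulant matrix $V_p$ is the $(d+1)\times(d+1)$ matrix whose $(i,j)$ entry ($0\le i,j\le d$) is $a_{(i-j-1)\bmod (d+1)}$; thus its first row is $(a_d,a_{d-1},\dots,a_0)$ and each subsequent row is the cyclic right shift of the previous one. Let $e=(0,\dots,0,1)^T\in\mathbb C^{d+1}$. $V_p$ has a finite period if there exist integers $\mu\ge1$, $k_0\ge0$ with $V_p^{n+\mu}e=V_p^ne$ for all $n\ge k_0$; the period of $V_p$ is the smallest such $\mu$. The column partial sums are $S_{[k]}:=[t^{(k-1)(d+1)}]\dfrac{(tp(t))^k}{(1-t)(1-t^{d+1})}$ for $k\ge1$ (equivalently, the sum of the coefficients of $t^0,\dots,t^{(k-1)(d+1)}$ in the power series $(tp(t))^k/(1-t^{d+1})$). Here $d=2$. A sequence $(s_i)$ is eventually periodic if there are $N\ge1$ and $K$ with $s_{i+N}=s_i$ for all $i\ge K$. 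*)

(* The complex field C is modelled as R[i] = complex R for
   an arbitrary R : realType (every realType is a model of the reals). *)
From HB Require Import structures.
From mathcomp Require Import all_boot all_order all_algebra.
From mathcomp Require Export reals complex.
Set Implicit Arguments. Unset Strict Implicit. Unset Printing Implicit Defensive.
Import Order.TTheory GRing.Theory Num.Theory.
Local Open Scope ring_scope.

Section Circulant.
Variable K : comNzRingType.

Definition circulant (d : nat) (p : {poly K}) : 'M[K]_(d.+1) :=
  \matrix_(i < d.+1, j < d.+1) p`_((i + d.+1 - j - 1) %% d.+1).

Definition last_basis (d : nat) : 'cV[K]_(d.+1) :=
  \col_(i < d.+1) (i == ord_max)%:R.

Definition is_period_witness (d : nat) (V : 'M[K]_(d.+1)) (mu : nat) : Prop :=
  (0 < mu)%N /\ exists k0 : nat, forall n : nat, (k0 <= n)%N ->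
    V ^+ (n + mu) *m last_basis d = V ^+ n *m last_basis d.

Definition has_finite_period (d : nat) (V : 'M[K]_(d.+1)) : Prop :=
  exists mu, is_period_witness V mu.

Definition is_period (d : nat) (V : 'M[K]_(d.+1)) (mu : nat) : Prop :=
  is_period_witness V mu /\ forall mu', is_period_witness V mu' -> (mu <= mu')%N.

(* S_[k] = sum of the coefficients of t^0..t^((k-1)(d+1)) in the power series
   (t p(t))^k / (1 - t^(d+1)); the coefficient of t^j in that series is
   sum_{l, (d+1) l <= j} [t^(j-(d+1)l)] (t p(t))^k. *)
Definition col_partial_sum (d : nat) (p : {poly K}) (k : nat) : K :=
  \sum_(j < ((k - 1) * d.+1).+1)
     \sum_(l < j.+1 | (d.+1 * l <= j)%N) (('X * p) ^+ k)`_(j - d.+1 * l).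

Definition eventually_periodic (T : Type) (s : nat -> T) : Prop :=
  exists N K0 : nat, (1 <= N)%N /\ forall i, (K0 <= i)%N -> s (i + N)%N = s i.

Definition unit_root (z : K) : Prop := exists n : nat, (0 < n)%N /\ z ^+ n = 1.

End Circulant.

From HB Require Import structures.
From mathcomp Require Import all_boot all_order all_algebra.
From mathcomp Require Import reals complex.
From mathcomp Require Import ring zify.
Set Implicit Arguments.
Unset Strict Implicit.
Unset Printing Implicit Defensive.

Import Order.TTheory GRing.Theory Num.Theory.
Local Open Scope ring_scope.

(* For a cube root of unity z, the functional x |-> sum_i x_i z^i is a left
   eigenvector of V_p with eigenvalue z p(z), and the three functionals for
   z = 1, w, w^2 (w a primitive cube root of unity) separate vectors.  Hence
   V_p^n e is governed by the powers of the eigenvalues p(1), w p(w) and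
   w^2 p(w^2).  The column partial sums admit the closed form
     9 S_[k] = 3k p(1)^(k-1) (2 p(1) - p'(1))
               - (3 p(1)^k + (2w^2+w) (w p(w))^k + (2w+w^2) (w^2 p(w^2))^k),
   so eventual periodicity kills the term linear in k: 2 p(1) = p'(1), i.e.
   b = -2a.  The eigenvalues are then x - 3a, x + 3a w, x + 3a w^2 with
   x = c + 2a; a finite period puts each of them on the unit circle or at 0,
   which forces x = 0, i.e. c = -2a.  The eigenvalues -3a, 3a w, 3a w^2 then
   give both the periodicity criterion and 6 | mu, (3a)^mu = 1. *)

Section DiscreteFourier.
Variables (K : comNzRingType) (d : nat).

Definition dft (z : K) (x : 'cV[K]_d.+1) : K := \sum_(i < d.+1) x i ord0 * z ^+ i.

Lemma dftB z (x y : 'cV[K]_d.+1) : dft z (x - y) = dft z x - dft z y.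
Proof. by rewrite /dft -sumrB; apply: eq_bigr => i _; rewrite !mxE mulrBl. Qed.

Lemma dft_last_basis z : dft z (last_basis K d) = z ^+ d.
Proof.
rewrite /dft (bigD1 ord_max) //= big1 => [|i /negbTE ne_i].
  by rewrite mxE eqxx mul1r addr0.
by rewrite mxE ne_i mul0r.
Qed.

Lemma dft_circulant (p : {poly K}) z x :
  (size p <= d.+1)%N -> z ^+ d.+1 = 1 ->
  dft z (circulant d p *m x) = z * p.[z] * dft z x.
Proof.
move=> size_p z_root; rewrite /dft mulr_sumr.
under eq_bigr do rewrite mxE mulr_suml.
rewrite exchange_big /=; apply: eq_bigr => j _.
(* Entry (i, j) of V_p is the coefficient of index sigma i, and sigma is a
   bijection with inverse tau. *)
pose sigma (i : 'I_d.+1) : 'I_d.+1 := inord ((i + d.+1 - j - 1) %% d.+1).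
pose tau (m : 'I_d.+1) : 'I_d.+1 := inord ((m + j.+1) %% d.+1).
have sigmaK : cancel sigma tau.
  move=> i; apply: val_inj; rewrite /= !inordK ?ltn_pmod //.
  have := ltn_ord j; rewrite modnDml => lt_j.
  by rewrite (_ : _ + j.+1 = i + d.+1)%N ?modnDr ?modn_small //; lia.
have exp_sigma (i : 'I_d.+1) : z ^+ i = z ^+ sigma i * z ^+ j.+1.
  by rewrite -exprD -[in LHS](sigmaK i) /= inordK ?expr_mod // ltn_pmod.
have horner_sigma : \sum_i p`_(sigma i) * z ^+ sigma i = p.[z].
  by rewrite (horner_coef_wide _ size_p) [RHS](reindex_inj (can_inj sigmaK)).
rewrite -horner_sigma mulrAC mulr_sumr; apply: eq_bigr => i _.
rewrite /circulant mxE exp_sigma /= inordK ?ltn_pmod // exprS; ring.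
Qed.

Lemma dft_circulant_pow (p : {poly K}) z n :
  (size p <= d.+1)%N -> z ^+ d.+1 = 1 ->
  dft z (circulant d p ^+ n *m last_basis K d) = z ^+ d * (z * p.[z]) ^+ n.
Proof.
move=> size_p z_root; elim: n => [|n IHn].
  by rewrite expr0 mul1mx dft_last_basis mulr1.
by rewrite exprS -mulmxE -mulmxA dft_circulant // IHn exprS; ring.
Qed.

End DiscreteFourier.

Lemma eventually_periodic_iter (T : Type) (s : nat -> T) K0 N :
  (forall i, (K0 <= i)%N -> s (i + N)%N = s i) ->
  forall q i, (K0 <= i)%N -> s (i + q * N)%N = s i.
Proof.
move=> s_per; elim=> [|q IHq] i le_K0i; first by rewrite mul0n addn0.
rewrite (_ : i + q.+1 * N = i + q * N + N)%N; last by rewrite mulSn; lia.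
by rewrite s_per ?IHq // (leq_trans le_K0i) ?leq_addr.
Qed.

Lemma expr_eventually_periodic (R : pzSemiRingType) (x : R) k0 mu q n :
  x ^+ (k0 + mu) = x ^+ k0 -> (k0 <= n)%N -> x ^+ (n + q * mu) = x ^+ n.
Proof.
move=> x_per; apply: (eventually_periodic_iter (s := fun n => x ^+ n)) => {}n le_k0n.
by rewrite -(subnKC le_k0n) addnAC exprD x_per -exprD.
Qed.

Lemma expr_period_eq1 (R : idomainType) (x : R) k0 mu :
  x != 0 -> x ^+ (k0 + mu) = x ^+ k0 -> x ^+ mu = 1.
Proof.
move=> x_neq0 x_per; apply: (mulfI (expf_neq0 k0 x_neq0)).
by rewrite -exprD x_per mulr1.
Qed.

Lemma norm_expr_period (R : numDomainType) (x : R) k0 mu :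
  (0 < mu)%N -> x ^+ (k0 + mu) = x ^+ k0 -> x = 0 \/ `|x| = 1.
Proof.
move=> mu_gt0 x_per; have [->|x_neq0] := eqVneq x 0; [by left | right].
move/(congr1 Num.norm): (expr_period_eq1 x_neq0 x_per).
by rewrite normrX normr1 => /eqP; rewrite pexpr_eq1 // => /eqP.
Qed.

Section CirculantEigenvalues.
Variables (K : idomainType) (d : nat) (p : {poly K}).
Hypothesis size_p : (size p <= d.+1)%N.
Local Notation V := (circulant d p).
Local Notation e := (last_basis K d).

Lemma eigenvalue_eventually_periodic mu k0 z : z ^+ d.+1 = 1 -> z != 0 ->
  (forall n, (k0 <= n)%N -> V ^+ (n + mu) *m e = V ^+ n *m e) ->
  (z * p.[z]) ^+ (k0 + mu) = (z * p.[z]) ^+ k0.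
Proof.
move=> z_root z_neq0 /(_ k0 (leqnn k0)) /(congr1 (dft z)).
by rewrite !dft_circulant_pow //; apply: mulfI; rewrite expf_neq0.
Qed.

Lemma eigenvalue_period_eq1 mu z : is_period_witness V mu ->
  z ^+ d.+1 = 1 -> z != 0 -> z * p.[z] != 0 -> (z * p.[z]) ^+ mu = 1.
Proof.
move=> [_ [k0 V_per]] z_root z_neq0 /expr_period_eq1; apply.
exact: eigenvalue_eventually_periodic V_per.
Qed.

End CirculantEigenvalues.

Lemma eigenvalue_norm_of_period (K : numDomainType) d (p : {poly K}) z :
  (size p <= d.+1)%N -> z ^+ d.+1 = 1 -> z != 0 -> has_finite_period (circulant d p) ->
  z * p.[z] = 0 \/ `|z * p.[z]| = 1.
Proof.
move=> size_p z_root z_neq0 [mu [mu_gt0 [k0 V_per]]].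
exact: norm_expr_period mu_gt0 (eigenvalue_eventually_periodic size_p z_root z_neq0 V_per).
Qed.

Section SumsOverMultiples.
Variable V : nmodType.

Lemma big_ord_prefix {F : nat -> V} N K (P : pred nat) : (K <= N)%N ->
  (forall i, (i < N)%N -> P i = (i < K)%N) ->
  \sum_(i < N | P i) F i = \sum_(i < K) F i.
Proof.
move=> le_KN P_prefix; rewrite (big_ord_widen _ F le_KN).
by apply: eq_bigl => i; rewrite P_prefix.
Qed.

Lemma sum_shift_le (g : nat -> V) N s :
  \sum_(j < N.+1 | (s <= j)%N) g (j - s)%N = \sum_(m < N.+1 | (m + s <= N)%N) g m.
Proof.
rewrite [RHS](big_ord_prefix (P := fun m => (m + s <= N)%N) (leq_subr s N.+1)) => [|m _]; last by lia.
have -> : \sum_(j < N.+1 | (s <= j)%N) g (j - s)%N = \sum_(s <= j < N.+1) g (j - s)%N.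
  by rewrite big_geq_mkord.
rewrite -{1}[s]add0n big_addn.
by rewrite big_mkord; apply: eq_bigr => m _; rewrite addnK.
Qed.

Variables (n : nat) (n_gt0 : (0 < n)%N).

Lemma sum_sub_multiples (g : nat -> V) N :
  \sum_(j < N.+1) \sum_(l < j.+1 | (n * l <= j)%N) g (j - n * l)%N =
  \sum_(m < N.+1) g m *+ ((N - m) %/ n).+1.
Proof.
have widen_l (j : 'I_N.+1) : \sum_(l < j.+1 | (n * l <= j)%N) g (j - n * l)%N =
    \sum_(l < N.+1 | (n * l <= j)%N) g (j - n * l)%N.
  rewrite (big_ord_widen_cond N.+1 (fun l => n * l <= j)%N (fun l => g (j - n * l)%N)
    (ltn_ord j)).
  apply: eq_bigl => l; apply/andP/idP => [[] // | le_nl_j].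
  by rewrite ltnS (leq_trans (leq_pmull l n_gt0)).
under eq_bigr do rewrite widen_l big_mkcond.
rewrite exchange_big /=.
under eq_bigr do rewrite -big_mkcond sum_shift_le big_mkcond.
rewrite exchange_big /=; apply: eq_bigr => m _; rewrite -big_mkcond /=.
rewrite (big_ord_prefix (F := fun=> g m) (P := fun l => (m + n * l <= N)%N)
  (K := ((N - m) %/ n).+1)).
- by rewrite sumr_const card_ord.
- by rewrite ltnS (leq_trans (leq_div _ _)) ?leq_subr.
- move=> l _; rewrite ltnS leq_divRL // leq_subRL; last by rewrite -ltnS.
  by rewrite mulnC.
Qed.

End SumsOverMultiples.

(* [(3 - m %% 3) %% 3] is the residue of [-m] modulo 3; the weight
   3 ((3(k-1) - m) / 3 + 1) of f_m equals 3k - m - ((-m) mod 3), which vanishes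
   for 3(k-1) < m <= 3k. *)
Lemma col_partial_sum2_weights (K : comNzRingType) (p : {poly K}) k : (0 < k)%N ->
  col_partial_sum 2 p k *+ 3 =
  \sum_(m < (3 * k).+1) (('X * p) ^+ k)`_m *+ (3 * k - m - (3 - m %% 3) %% 3).
Proof.
move=> k_gt0; rewrite /col_partial_sum sum_sub_multiples // -sumrMnl.
have le_k : (((k - 1) * 3).+1 <= (3 * k).+1)%N by lia.
rewrite (big_ord_widen _ (fun m => (('X * p) ^+ k)`_m *+ (((k - 1) * 3 - m) %/ 3).+1 *+ 3)
  le_k) big_mkcond /=; apply: eq_bigr => m _; have lt_m := ltn_ord m.
case: ifP => [le_m | /negbT gt_m]; first by rewrite -mulrnA; congr (_ *+ _); lia.
by rewrite -(mulr0n (('X * p) ^+ k)`_m); congr (_ *+ _); lia.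
Qed.

Section PolyCoefSums.
Variable K : comNzRingType.

Lemma horner1_coef (f : {poly K}) N : (size f <= N)%N -> f.[1] = \sum_(m < N) f`_m.
Proof.
by move=> size_f; rewrite (horner_coef_wide _ size_f); apply: eq_bigr => m _; rewrite expr1n mulr1.
Qed.

Lemma deriv_horner1_coef (f : {poly K}) N : (size f <= N.+1)%N ->
  f^`().[1] = \sum_(m < N.+1) f`_m *+ m.
Proof.
move=> size_f; have size_df : (size f^`() <= N)%N.
  apply/leq_sizeP => j le_Nj; rewrite coef_deriv.
  by move/leq_sizeP: size_f => ->; rewrite ?mul0rn.
rewrite (horner1_coef size_df) big_ord_recl /= mulr0n add0r.
by apply: eq_bigr => m _; rewrite coef_deriv.
Qed.

Lemma size_exp_mulX_le (p : {poly K}) n k : (size p <= n)%N ->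
  (size (('X * p) ^+ k) <= n * k + 1)%N.
Proof.
move=> size_p; elim: k => [|k IHk]; first by rewrite expr0 size_poly1 muln0.
rewrite exprS; apply: leq_trans (size_polyMleq _ _) _.
have : (size ('X * p)%R <= n.+1)%N.
  by apply: leq_trans (size_polyMleq _ _) _; rewrite size_polyX; lia.
lia.
Qed.

End PolyCoefSums.

Section CubeRootsOfUnity.
Context {R : realType}.
Local Notation C := R[i].

Lemma exists_primitive_cube_root : exists w : C, w ^+ 2 + w + 1 = 0.
Proof.
have [x hx] := @solve_monicpoly C 2 (fun=> -1) isT.
by exists x; move: hx; rewrite !big_ord_recr big_ord0 /= add0r => ->; ring.
Qed.

Context {w : C} (w_root : w ^+ 2 + w + 1 = 0).

Lemma eq_mod_cyclotomic (Q u v : C) : u - v = (w ^+ 2 + w + 1) * Q -> u = v.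
Proof. by rewrite w_root mul0r => /eqP; rewrite subr_eq0 => /eqP. Qed.

Lemma three_neq0 : (3 : C) != 0.
Proof. by rewrite pnatr_eq0. Qed.

Lemma cube_w : w ^+ 3 = 1.
Proof. by apply: (@eq_mod_cyclotomic (w - 1)); ring. Qed.

Lemma cube_w2 : (w ^+ 2) ^+ 3 = 1.
Proof. by rewrite exprAC cube_w expr1n. Qed.

Lemma w_neq0 : w != 0.
Proof. by apply/eqP=> w_eq0; move: cube_w; rewrite w_eq0 expr0n => /eqP; rewrite eq_sym oner_eq0. Qed.

Lemma w_neq1 : w != 1.
Proof.
apply/eqP=> w_eq1; move: w_root; rewrite w_eq1 expr1n => /eqP.
by rewrite (_ : 1 + 1 + 1 = 3) ?(negbTE three_neq0) //; ring.
Qed.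

Lemma w2_neq1 : w ^+ 2 != 1.
Proof.
apply: contraNneq w_neq1 => w2_eq1.
by rewrite -cube_w exprS w2_eq1 mulr1.
Qed.

Lemma expr_w_mod3 n : w ^+ n = w ^+ (n %% 3).
Proof. by rewrite expr_mod // cube_w. Qed.

Lemma norm_w : `|w| = 1.
Proof. by apply/eqP; rewrite -(@pexpr_eq1 _ _ 3) // -normrX cube_w normr1. Qed.

Lemma conj_w : w^* = w ^+ 2.
Proof.
apply: (mulfI w_neq0); rewrite -normCK norm_w expr1n.
by rewrite -exprS cube_w.
Qed.

Lemma norm_w_sub1 : `|w - 1| ^+ 2 = 3.
Proof.
rewrite normCK rmorphB rmorph1; change ((w - 1) * (w^* - 1) = 3); rewrite conj_w.
by apply: (@eq_mod_cyclotomic (w - 2)); ring.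
Qed.

Lemma dft3_eq0 (x : 'cV[C]_3) :
  dft 1 x = 0 -> dft w x = 0 -> dft (w ^+ 2) x = 0 -> x = 0.
Proof.
have w4 : (w ^+ 2) ^+ 2 = w by rewrite -exprM expr_w_mod3.
rewrite /dft !big_ord_recl !big_ord0 /bump /= !expr0 !expr1 w4 !expr1n !mulr1 !addr0 !addrA.
set x0 := x ord0 ord0; set x1 := x _ ord0; set x2 := x _ ord0 => dft1 dftw dftw2.
have solve (y L Q : C) : L = 0 -> 3 * y - L = (w ^+ 2 + w + 1) * Q -> y = 0.
  move=> ->; rewrite subr0 w_root mul0r => /eqP.
  by rewrite mulf_eq0 (negbTE three_neq0) => /eqP.
have x0_eq0 : x0 = 0.
  apply: (solve _ (x0 + x1 + x2 + (x0 + x1 * w + x2 * w ^+ 2) + (x0 + x1 * w ^+ 2 + x2 * w))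
    (- (x1 + x2))); last by ring.
  by rewrite dft1 dftw dftw2 !addr0.
have x1_eq0 : x1 = 0.
  apply: (solve _ (x0 + x1 + x2 + w ^+ 2 * (x0 + x1 * w + x2 * w ^+ 2) + w * (x0 + x1 * w ^+ 2 + x2 * w))
    (- (x0 + 2 * x1 * (w - 1) + x2 * (w ^+ 2 - w + 1)))); last by ring.
  by rewrite dft1 dftw dftw2 !mulr0 !addr0.
have x2_eq0 : x2 = 0.
  apply: (solve _ (x0 + x1 + x2 + w * (x0 + x1 * w + x2 * w ^+ 2) + w ^+ 2 * (x0 + x1 * w ^+ 2 + x2 * w))
    (- (x0 + x1 * (w ^+ 2 - w + 1) + 2 * x2 * (w - 1)))); last by ring.
  by rewrite dft1 dftw dftw2 !mulr0 !addr0.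
apply/matrixP => i j; rewrite (ord1 j) mxE.
case: i => [[|[|[|//]]] lt_i].
- by rewrite -[RHS]x0_eq0; congr (x _ _); apply/val_inj.
- by rewrite -[RHS]x1_eq0; congr (x _ _); apply/val_inj.
- by rewrite -[RHS]x2_eq0; congr (x _ _); apply/val_inj.
Qed.

Lemma expr_w_eq1 n : w ^+ n = 1 -> (3 %| n)%N.
Proof.
rewrite expr_w_mod3 /dvdn; case: (n %% 3)%N (ltn_pmod n (isT : (0 < 3)%N)) => [|[|[|//]]] //= _.
  by rewrite expr1 => /eqP; rewrite (negbTE w_neq1).
by move=> /eqP; rewrite (negbTE w2_neq1).
Qed.

Lemma period_witness_of_eigenvalues (p : {poly C}) mu : (size p <= 3)%N ->
  p.[1] ^+ mu = 1 -> (w * p.[w]) ^+ mu = 1 -> (w ^+ 2 * p.[w ^+ 2]) ^+ mu = 1 ->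
  forall n, circulant 2 p ^+ (n + mu) *m last_basis C 2 = circulant 2 p ^+ n *m last_basis C 2.
Proof.
move=> size_p eig1 eigw eigw2 n; apply/eqP; rewrite -subr_eq0; apply/eqP.
apply: dft3_eq0; rewrite dftB !dft_circulant_pow ?expr1n ?cube_w ?cube_w2 //.
- by rewrite !mul1r exprD eig1 mulr1 subrr.
- by rewrite exprD eigw mulr1 subrr.
- by rewrite exprD eigw2 mulr1 subrr.
Qed.

Lemma residue_neg_mod3E m : 3 * ((3 - m %% 3) %% 3)%:R =
  3 + (2 * w ^+ 2 + w) * w ^+ m + (2 * w + w ^+ 2) * (w ^+ 2) ^+ m :> C.
Proof.
rewrite -exprM (expr_w_mod3 m) (expr_w_mod3 (2 * m)) -modnMmr.
case: (m %% 3)%N (ltn_pmod m (isT : (0 < 3)%N)) => [|[|[|//]]] _ /=.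
- rewrite -[((3 - 0) %% 3)%N]/0%N.
  by apply: (@eq_mod_cyclotomic (-3)); ring.
- rewrite -[((3 - 1) %% 3)%N]/2%N.
  by apply: (@eq_mod_cyclotomic (- (w ^+ 2 + 3 * w - 3))); ring.
- rewrite -[((3 - 2) %% 3)%N]/1%N.
  by apply: (@eq_mod_cyclotomic (- (2 * w ^+ 2))); ring.
Qed.

Lemma sum_coef_residue_neg_mod3 (f : {poly C}) N : (size f <= N)%N ->
  3 * \sum_(m < N) f`_m *+ ((3 - m %% 3) %% 3) =
  3 * f.[1] + (2 * w ^+ 2 + w) * f.[w] + (2 * w + w ^+ 2) * f.[w ^+ 2].
Proof.
move=> size_f; rewrite !(horner_coef_wide _ size_f) !mulr_sumr -!big_split /=.
apply: eq_bigr => m _; rewrite -[f`_m *+ _]mulr_natr mulrCA residue_neg_mod3E expr1n.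
by move: (w ^+ m) ((w ^+ 2) ^+ m) => u v; ring.
Qed.

Lemma col_partial_sum2E (p : {poly C}) k : (size p <= 3)%N -> (0 < k)%N ->
  9 * col_partial_sum 2 p k =
  3 * k%:R * p.[1] ^+ k.-1 * (2 * p.[1] - p^`().[1])
  - (3 * p.[1] ^+ k + (2 * w ^+ 2 + w) * (w * p.[w]) ^+ k
     + (2 * w + w ^+ 2) * (w ^+ 2 * p.[w ^+ 2]) ^+ k).
Proof.
move=> size_p k_gt0; set f := ('X * p) ^+ k.
have size_f : (size f <= (3 * k).+1)%N by rewrite -addn1 size_exp_mulX_le.
have f_eval z : f.[z] = (z * p.[z]) ^+ k by rewrite horner_exp hornerM hornerX.
have df_1 : f^`().[1] = k%:R * p.[1] ^+ k.-1 * (p.[1] + p^`().[1]).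
  by rewrite deriv_exp derivM derivX hornerMn !hornerE -mulr_natl; ring.
have split_weights : \sum_(m < (3 * k).+1) f`_m *+ (3 * k - m - (3 - m %% 3) %% 3) =
    (\sum_(m < (3 * k).+1) f`_m) *+ (3 * k) - \sum_(m < (3 * k).+1) f`_m *+ m
    - \sum_(m < (3 * k).+1) f`_m *+ ((3 - m %% 3) %% 3).
  rewrite -sumrMnl -!sumrB; apply: eq_bigr => m _; have lt_m := ltn_ord m.
  by rewrite !mulrnBr //; lia.
have -> : 9 * col_partial_sum 2 p k = 3 * (col_partial_sum 2 p k *+ 3).
  by rewrite -mulr_natr; ring.
rewrite col_partial_sum2_weights // split_weights -horner1_coef // -deriv_horner1_coef //.
rewrite -[f.[1] *+ _]mulr_natr mulrBr sum_coef_residue_neg_mod3 // df_1 !f_eval mul1r natrM.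
have -> : p.[1] ^+ k = p.[1] * p.[1] ^+ k.-1 by rewrite -exprS prednK.
move: (p.[1] ^+ k.-1) ((w * p.[w]) ^+ k) ((w ^+ 2 * p.[w ^+ 2]) ^+ k) => A B D.
by move: p.[1] p^`().[1] => P1 dP1; ring.
Qed.

Lemma periodic_col_sums_deriv (p : {poly C}) : (size p <= 3)%N -> p.[1] != 0 ->
  has_finite_period (circulant 2 p) ->
  eventually_periodic (fun k => col_partial_sum 2 p k) -> p^`().[1] = 2 * p.[1].
Proof.
move=> size_p p1_neq0 [mu [mu_gt0 [k0 V_per]]] [N [K0 [N_gt0 S_per]]].
have eig_per z n : z ^+ 3 = 1 -> z != 0 -> (k0 <= n)%N ->
    (z * p.[z]) ^+ (n + N * mu) = (z * p.[z]) ^+ n.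
  move=> z_root z_neq0; apply: expr_eventually_periodic.
  exact: eigenvalue_eventually_periodic V_per.
have eig1_per n : (k0 <= n)%N -> p.[1] ^+ (n + N * mu) = p.[1] ^+ n.
  by move/(eig_per 1 n (expr1n _ _) (oner_neq0 _)); rewrite mul1r.
set k := (K0 + k0).+1; have le_k0k1 : (k0 <= k.-1)%N by rewrite leq_addl.
have le_k0k : (k0 <= k)%N by rewrite (leq_trans le_k0k1) ?leq_pred.
have := eventually_periodic_iter S_per mu (leq_trans (leq_addr k0 K0) (leqnSn _)).
move/(congr1 (fun s => 9 * s)); rewrite !col_partial_sum2E // ?addn_gt0 //.
rewrite -/k (mulnC mu N) (eig_per w) ?cube_w ?w_neq0 //.
rewrite (eig_per (w ^+ 2)) ?cube_w2 ?expf_neq0 ?w_neq0 // (eig1_per _ le_k0k).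
rewrite (_ : (k + N * mu).-1 = k.-1 + N * mu)%N; last by rewrite /k; lia.
rewrite (eig1_per _ le_k0k1) natrD => /eqP; rewrite -subr_eq0 => /eqP.
have : p.[1] ^+ k.-1 != 0 by rewrite expf_neq0.
move: (p.[1] ^+ k.-1) (p.[1] ^+ k) ((w * p.[w]) ^+ k) ((w ^+ 2 * p.[w ^+ 2]) ^+ k).
move: p.[1] p^`().[1] => P1 dP1 A B E F A_neq0 eq0.
have /eqP : 3 * (N * mu)%:R * A * (2 * P1 - dP1) = 0 by rewrite -eq0; ring.
rewrite !mulf_eq0 (negbTE three_neq0) (negbTE A_neq0) pnatr_eq0 muln_eq0.
by move: N_gt0 mu_gt0; rewrite !lt0n => /negbTE -> /negbTE ->; rewrite subr_eq0 => /eqP.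
Qed.

Lemma norm_vertex_opposite (x A : C) : x + A * w = 0 ->
  `|x - A| = `|A| /\ `|x + A * w ^+ 2| ^+ 2 = 3 * `|A| ^+ 2.
Proof.
move=> /eqP; rewrite addr_eq0 => /eqP ->; split.
  rewrite (@eq_mod_cyclotomic (- A) (- (A * w) - A) (A * w ^+ 2)); last by ring.
  by rewrite normrM normrX norm_w expr1n mulr1.
rewrite (_ : - (A * w) + _ = A * w * (w - 1)); last by ring.
by rewrite !normrM norm_w mulr1 exprMn norm_w_sub1 mulrC.
Qed.

Lemma vertex_opposite_contra (x A : C) : x + A * w = 0 -> `|x - A| = 1 ->
  ~ (x + A * w ^+ 2 = 0 \/ `|x + A * w ^+ 2| = 1).
Proof.
move=> /norm_vertex_opposite [-> norm_w2] unitA.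
rewrite unitA expr1n mulr1 in norm_w2.
case=> [zero_w2 | unit_w2].
  by move: three_neq0; rewrite -norm_w2 zero_w2 normr0 expr0n eqxx.
by move: norm_w2; rewrite unit_w2 expr1n => /eqP; rewrite eq_sym pnatr_eq1.
Qed.

(* The three points lie on the unit circle and on the circle of radius |A|
   around x; two distinct circles share at most two points. *)
Lemma unit_vertices_center (x A : C) : A != 0 ->
  `|x - A| = 1 -> `|x + A * w| = 1 -> `|x + A * w ^+ 2| = 1 -> x = 0.
Proof.
have unitE y : `|y| = 1 -> y * y^* = 1 by rewrite -normCK => ->; rewrite expr1n.
have conjE u v z : (u + v * z)^* = u^* + v^* * z^* by rewrite rmorphD rmorphM.
have conj_w2 : (w ^+ 2)^* = w by rewrite -conj_w conjCK.
move=> A_neq0 /unitE unit1 /unitE unitw /unitE unitw2.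
have {}unit1 : (x - A) * (x^* - A^*) = 1 by rewrite -unit1 rmorphB.
rewrite conjE conj_w in unitw; rewrite conjE conj_w2 in unitw2.
suff /eqP : x^* = 0 by rewrite conjC_eq0 => /eqP.
move: (x^*) (A^*) unit1 unitw unitw2 => Y B unit1 unitw unitw2.
have mul_w_eq0 t : w * t = 0 -> t = 0.
  by move/eqP; rewrite mulf_eq0 (negbTE w_neq0) => /eqP.
have side_w : x * B + w * A * Y = 0.
  apply/mul_w_eq0/oppr_inj; rewrite oppr0 -(subrr 1) -{1}unitw -unit1.
  by apply: (@eq_mod_cyclotomic (- (x * B + A * Y + A * B * (w - 1)))); ring.
have side_w2 : w * x * B + A * Y = 0.
  apply/mul_w_eq0/oppr_inj; rewrite oppr0 -(subrr 1) -{1}unitw2 -unit1.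
  by apply: (@eq_mod_cyclotomic (- (x * B + A * Y + A * B * (w - 1)))); ring.
have /eqP : A * Y * (w ^+ 2 - 1) = 0.
  rewrite (_ : _ * _ = w * (x * B + w * A * Y) - (w * x * B + A * Y)); last by ring.
  by rewrite side_w side_w2 mulr0 subr0.
by rewrite !mulf_eq0 (negbTE A_neq0) subr_eq0 (negbTE w2_neq1) orbF => /eqP.
Qed.

End CubeRootsOfUnity.

Lemma cube_root_unit_vertices (R : realType) (w x A : R[i]) :
  w ^+ 2 + w + 1 = 0 -> A != 0 -> `|x - A| = 1 ->
  x + A * w = 0 \/ `|x + A * w| = 1 ->
  x + A * w ^+ 2 = 0 \/ `|x + A * w ^+ 2| = 1 -> x = 0.
Proof.
move=> w_root A_neq0 unit1 [opp_w | unit_w] vertex_w2.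
  by case: (vertex_opposite_contra w_root opp_w unit1 vertex_w2).
case: vertex_w2 => [opp_w2 | unit_w2].
  have w4 : (w ^+ 2) ^+ 2 = w by rewrite -exprM (expr_w_mod3 w_root).
  have w2_root : (w ^+ 2) ^+ 2 + w ^+ 2 + 1 = 0 by rewrite w4 -w_root; ring.
  by case: (vertex_opposite_contra w2_root opp_w2 unit1); rewrite w4; right.
exact: (unit_vertices_center w_root A_neq0 unit1 unit_w unit_w2).
Qed.

Section QuadraticCirculant.
Context {R : realType} {w : R[i]} (w_root : w ^+ 2 + w + 1 = 0).
Variables a b c : R[i].
Local Notation p := (a%:P + b *: 'X + c *: 'X^2).
Local Notation V := (circulant 2 p).
Local Notation S := (fun k : nat => col_partial_sum 2 p k).

Lemma size_quadratic : (size p <= 3)%N.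
Proof.
by apply/leq_sizeP => -[|[|[|j]]] //= _; rewrite !coefE //=; ring.
Qed.

Lemma horner_quadratic z : p.[z] = a + b * z + c * z ^+ 2.
Proof. by rewrite !hornerE. Qed.

Lemma deriv1_quadratic : p^`().[1] = b + 2 * c.
Proof. by rewrite !derivE !hornerE /=; ring. Qed.

Lemma quadratic_eigenvalues : b = -2 * a ->
  [/\ p.[1] = (c + 2 * a) - 3 * a, w * p.[w] = (c + 2 * a) + 3 * a * w
    & w ^+ 2 * p.[w ^+ 2] = (c + 2 * a) + 3 * a * w ^+ 2].
Proof.
move=> b_eq; rewrite !horner_quadratic b_eq; split.
- by rewrite expr1n; ring.
- by apply: (@eq_mod_cyclotomic _ _ w_root (c * (w - 1) - 2 * a)); ring.
- apply: (@eq_mod_cyclotomic _ _ w_root (c * (w - 1) * (w ^+ 3 + 1) - 2 * a * (w ^+ 2 - w + 1))).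
  by ring.
Qed.

Lemma periodic_circulant_coefs : a * c * (a + b + c) != 0 ->
  has_finite_period V -> eventually_periodic S ->
  [/\ b = -2 * a, c = -2 * a & unit_root (3 * a)].
Proof.
rewrite !mulf_eq0 !negb_or => /andP [/andP [a_neq0 _] sum_neq0] V_fin S_per.
have p1_eq : p.[1] = a + b + c by rewrite horner_quadratic expr1n !mulr1.
have b_eq : b = -2 * a.
  have := periodic_col_sums_deriv w_root size_quadratic _ V_fin S_per.
  rewrite deriv1_quadratic p1_eq => /(_ sum_neq0) /eqP; rewrite -subr_eq0 => /eqP eq0.
  by apply/eqP; rewrite -subr_eq0 -oppr_eq0 -eq0; apply/eqP; ring.
have [eig1 eigw eigw2] := quadratic_eigenvalues b_eq.
have eig_norm z : z ^+ 3 = 1 -> z != 0 -> z * p.[z] = 0 \/ `|z * p.[z]| = 1.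
  by move=> z_root z_neq0; apply: eigenvalue_norm_of_period size_quadratic z_root z_neq0 V_fin.
have A_neq0 : 3 * a != 0 by rewrite mulf_neq0 ?three_neq0.
have unit1 : `|c + 2 * a - 3 * a| = 1.
  case: (eig_norm 1 (expr1n _ _) (oner_neq0 _)); rewrite mul1r -eig1 //.
  by move=> p1_eq0; move: sum_neq0; rewrite -p1_eq p1_eq0 eqxx.
have := eig_norm _ (cube_w w_root) (w_neq0 w_root); rewrite eigw.
have := eig_norm _ (cube_w2 w_root) (expf_neq0 2 (w_neq0 w_root)); rewrite eigw2.
move=> /(cube_root_unit_vertices w_root A_neq0 unit1) vertex_w2 /vertex_w2 x_eq0.
have c_eq : c = -2 * a by apply/eqP; rewrite -subr_eq0 -x_eq0; apply/eqP; ring.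
split=> //; case: V_fin => mu W; exists (2 * mu)%N; split; first by case: W; lia.
have := eigenvalue_period_eq1 size_quadratic W (expr1n _ _) (oner_neq0 _).
rewrite mul1r p1_eq => /(_ sum_neq0); rewrite b_eq c_eq => eig1_mu.
rewrite exprM (_ : (3 * a) ^+ 2 = (a + -2 * a + -2 * a) ^+ 2); last by ring.
by rewrite exprAC eig1_mu expr1n.
Qed.

Lemma special_eigenvalues : b = -2 * a -> c = -2 * a ->
  [/\ p.[1] = - (3 * a), w * p.[w] = 3 * a * w & w ^+ 2 * p.[w ^+ 2] = 3 * a * w ^+ 2].
Proof.
move=> b_eq c_eq; have [-> -> ->] := quadratic_eigenvalues b_eq.
by rewrite c_eq (_ : -2 * a + 2 * a = 0) ?sub0r ?add0r //; ring.
Qed.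

Lemma special_circulant_periodic : b = -2 * a -> c = -2 * a -> unit_root (3 * a) ->
  has_finite_period V /\ eventually_periodic S.
Proof.
move=> b_eq c_eq [n [n_gt0 A_n]]; have [eig1 eigw eigw2] := special_eigenvalues b_eq c_eq.
have pow_6n x : x ^+ 6 = (3 * a) ^+ 6 -> x ^+ (6 * n) = 1.
  by move=> x6; rewrite exprM x6 exprAC A_n expr1n.
have w6 k : (w ^+ k) ^+ 6 = 1 by rewrite exprAC (exprM w 3 2) cube_w // !expr1n.
have eig1_6n : p.[1] ^+ (6 * n) = 1 by apply: pow_6n; rewrite eig1; ring.
have eigw_6n : (w * p.[w]) ^+ (6 * n) = 1.
  by apply: pow_6n; rewrite eigw exprMn -[w]expr1 w6 mulr1.
have eigw2_6n : (w ^+ 2 * p.[w ^+ 2]) ^+ (6 * n) = 1.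
  by apply: pow_6n; rewrite eigw2 exprMn w6 mulr1.
split.
  exists (6 * n)%N; split; [lia | exists 0%N => m _].
  exact: (period_witness_of_eigenvalues w_root size_quadratic eig1_6n eigw_6n eigw2_6n m).
have balanced : 2 * p.[1] - p^`().[1] = 0.
  by rewrite deriv1_quadratic horner_quadratic b_eq c_eq expr1n; ring.
exists (6 * n)%N, 1%N; split=> [|i i_gt0]; first by lia.
apply: (mulfI (_ : 9 != 0 :> R[i])); first by rewrite pnatr_eq0.
rewrite !(col_partial_sum2E w_root) ?size_quadratic ?addn_gt0 ?i_gt0 // balanced !mulr0 !sub0r.
by rewrite !(exprD _ i (6 * n)) eig1_6n eigw_6n eigw2_6n !mulr1.
Qed.

Lemma special_circulant_period mu : a != 0 -> b = -2 * a -> c = -2 * a ->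
  is_period_witness V mu -> (6 %| mu)%N /\ (3 * a) ^+ mu = 1.
Proof.
move=> a_neq0 b_eq c_eq W; have [eig1 eigw eigw2] := special_eigenvalues b_eq c_eq.
have A_neq0 : 3 * a != 0 by rewrite mulf_neq0 ?three_neq0.
have w_neq0 := w_neq0 w_root; have w2_neq0 : w ^+ 2 != 0 by rewrite expf_neq0.
have := eigenvalue_period_eq1 size_quadratic W (expr1n _ _) (oner_neq0 _).
rewrite mul1r eig1 oppr_eq0 => /(_ A_neq0) eig1_mu.
have := eigenvalue_period_eq1 size_quadratic W (cube_w w_root) w_neq0.
rewrite eigw mulf_neq0 // => /(_ isT); rewrite exprMn => eigw_mu.
have := eigenvalue_period_eq1 size_quadratic W (cube_w2 w_root) w2_neq0.
rewrite eigw2 mulf_neq0 // => /(_ isT); rewrite exprMn exprAC => eigw2_mu.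
have w_mu : w ^+ mu = 1.
  apply: (mulfI (_ : (3 * a) ^+ mu * w ^+ mu != 0)); first by rewrite eigw_mu oner_neq0.
  by rewrite -mulrA -expr2 eigw2_mu eigw_mu mulr1.
have A_mu : (3 * a) ^+ mu = 1 by move: eigw_mu; rewrite w_mu mulr1.
have even_mu : (2 %| mu)%N.
  move: eig1_mu; rewrite -mulN1r exprMn A_mu mulr1 -signr_odd dvdn2.
  case: (odd mu) => //= /eqP; rewrite -subr_eq0 -opprD oppr_eq0 (_ : 1 + 1 = 2) //.
  by rewrite pnatr_eq0.
by have := expr_w_eq1 w_root w_mu; split=> //; lia.
Qed.

End QuadraticCirculant.

Theorem proposition13 (R : realType) (a b c : R[i]) :
  a * c * (a + b + c) != 0 ->
  let p : {poly R[i]} := a%:P + b *: 'X + c *: 'X^2 in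
  let V := circulant 2 p in
  ((has_finite_period V /\
    eventually_periodic (fun k : nat => col_partial_sum 2 p k))
   <-> ((b = -2 * a)%R /\ (c = -2 * a)%R /\ unit_root (3 * a)%R))
  /\ (((b = -2 * a)%R /\ (c = -2 * a)%R /\ unit_root (3 * a)%R) ->
      forall mu : nat, is_period V mu -> (6 %| mu)%N /\ ((3 * a) ^+ mu = 1)%R).
Proof.
move=> coefs_neq0 p V; have [w w_root] := @exists_primitive_cube_root R.
have a_neq0 : a != 0 by move: coefs_neq0; rewrite !mulf_eq0 !negb_or => /andP [/andP []].
split; first split.
- by case=> V_fin S_per; have [] := periodic_circulant_coefs w_root coefs_neq0 V_fin S_per.
- by case=> b_eq [c_eq A_root]; exact: (special_circulant_periodic w_root b_eq c_eq A_root).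
- by case=> b_eq [c_eq _] mu [W _]; exact: (special_circulant_period w_root a_neq0 b_eq c_eq W).
Qed.
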